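(* Let $P$ be a classifier on $\mathbb{R}^n$ that is non-trivial, i.e. its label set $L_P$ has more than one element. Then $P$ has infinite pointwise coverage if and only if $P$ is a refined linear classifier.
   Context: A classifier is a partition $P$ of $\mathbb{R}^n$ together with a distinguished member $R \in P$, the refinement set, which may be empty and which is both meagre and Lebesgue null. The label set is $L_P = P \setminus \{R\}$ and the feature space is $\bigcup L_P$. For $x \in \mathbb{R}^n$, $P(x)$ denotes the member of $P$ containing $x$. The classifier is trivial if $L_P$ is a singleton, and non-trivial otherwise. An anchor for a point $x$ is an open ball $A = B(c,r)$ (center $c$, radius $r>0$) with $x \in A \subseteq P(x)$; its coverage is its radius $r$. The coverage of $P$ at $x$ is $C_P(x) = \sup\{ r : B(c,r) \text{ is an anchor for } x\}$, taken to be $0$ if $x$ has no anchor and $\infty$ if there are anchors for $x$ of arbitrarily large radius. $P$ has infinite pointwise coverage if $\inf\{C_P(x) : x \in \bigcup L_P\} = \infty$, i.e. $C_P(x) = \infty$ for every $x$ in the feature space. A refined linear classifier is a classifier of the form $P = \{M, N, R\}$ with $L_P = \{M, N\}$, where $R$ is an affine hyperplane in $\mathbb{R}^n$ and $M, N$ are the two open halfspaces on either side of $R$. *)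

(* R^n is modelled as 'rV[R]_n for R : realType,
   with the library's (product = Euclidean) topology; balls are Euclidean. *)
From HB Require Import structures.
From mathcomp Require Import all_boot all_order all_algebra.
From mathcomp Require Import all_classical all_reals all_analysis.
Set Implicit Arguments. Unset Strict Implicit. Unset Printing Implicit Defensive.
Import Order.TTheory GRing.Theory Num.Theory.
Import numFieldNormedType.Exports.
Local Open Scope classical_set_scope.
Local Open Scope ring_scope.

Section ClassifierDefs.
Variables (R : realType) (n : nat).
Local Notation V := 'rV[R]_n.

Definition eball (c : V) (r : R) : set V :=
  [set x | \sum_(i < n) (x ord0 i - c ord0 i) ^+ 2 < r ^+ 2].

Definition nowhere_dense (A : set V) : Prop := interior (closure A) = set0.

Definition meagre (A : set V) : Prop :=
  exists F : nat -> set V, (forall k, nowhere_dense (F k)) /\ A `<=` \bigcup_k F k.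

Definition box (a b : V) : set V := [set x | forall i, a ord0 i <= x ord0 i <= b ord0 i].
Definition box_vol (a b : V) : R := \prod_(i < n) (b ord0 i - a ord0 i).

Definition lebesgue_null (A : set V) : Prop :=
  forall eps : R, 0 < eps ->
  exists a b : nat -> V,
    (forall k i, a k ord0 i <= b k ord0 i) /\
    A `<=` \bigcup_k box (a k) (b k) /\
    (\sum_(0 <= k <oo) (box_vol (a k) (b k))%:E < eps%:E)%E.

Definition partition_with (P : set (set V)) (Rf : set V) : Prop :=
  (forall A B x, P A -> P B -> A x -> B x -> A = B) /\
  (forall x, exists A, P A /\ A x) /\
  (forall A, P A -> A <> Rf -> A !=set0).

Definition classifier (P : set (set V)) (Rf : set V) : Prop :=
  partition_with P Rf /\ P Rf /\ meagre Rf /\ lebesgue_null Rf.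

Definition label_set (P : set (set V)) (Rf : set V) : set (set V) :=
  [set A | P A /\ A <> Rf].

Definition feature_space (P : set (set V)) (Rf : set V) : set V :=
  \bigcup_(A in label_set P Rf) A.

Definition nontrivial (P : set (set V)) (Rf : set V) : Prop :=
  exists A B, label_set P Rf A /\ label_set P Rf B /\ A <> B.

Definition anchor (P : set (set V)) (x c : V) (r : R) : Prop :=
  0 < r /\ eball c r x /\ (forall A, P A -> A x -> eball c r `<=` A).

Definition coverage (P : set (set V)) (x : V) : \bar R :=
  let radii := [set (r%:E)%E | r in [set r | exists c, anchor P x c r]] in
  if radii == set0 then 0%E else ereal_sup radii.

Definition infinite_pointwise_coverage (P : set (set V)) (Rf : set V) : Prop :=
  ereal_inf [set coverage P x | x in feature_space P Rf] = +oo%E.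

Definition refined_linear (P : set (set V)) (Rf : set V) : Prop :=
  exists (a : V) (b : R), a != 0 /\
    let dot (x : V) : R := \sum_(i < n) a ord0 i * x ord0 i in
    let M := [set x | dot x > b] in
    let N := [set x | dot x < b] in
    Rf = [set x | dot x = b] /\
    P = [set A | A = M \/ A = N \/ A = Rf] /\
    label_set P Rf = [set A | A = M \/ A = N].

End ClassifierDefs.

From HB Require Import structures.
From mathcomp Require Import all_boot all_order all_algebra.
From mathcomp Require Import all_classical all_reals all_analysis.
From mathcomp Require Import ring lra.

(* If a label L anchors a point x by balls of unbounded radius, write their
   centres as x + r_k w_k with |w_k| < 1 and let ws be a cluster point of the
   w_k: the balls exhaust the open halfspace {y | ws.(y - x) > 0}, and all of
   R^n if ws = 0.  Another label is disjoint from L, so ws <> 0 and L contains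
   an open halfspace bounded by a hyperplane through x.  Disjoint open
   halfspaces have opposite normals, so all these normals are +u or -u for one
   unit vector u; hence there are exactly two labels, A = {u.z > a} and
   B = {u.z < b} with b <= a.  The slab b <= u.z <= a then lies in the
   refinement set, which is meagre, so a = b by Baire's theorem.  Conversely,
   an open halfspace contains balls of any radius through each of its points. *)

Set Implicit Arguments. Unset Strict Implicit. Unset Printing Implicit Defensive.
Import Order.TTheory GRing.Theory Num.Theory.
Import numFieldNormedType.Exports.
Local Open Scope classical_set_scope.
Local Open Scope ring_scope.

(* Makes ['rV[R]_n] a [completeNormedModType R], as [Baire] requires. *)
HB.instance Definition _ (R : realType) m n := Complete.on 'M[R]_(m, n).

Section EuclideanGeometry.
Variables (R : realType) (n : nat).
Local Notation V := 'rV[R]_n.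

Definition dotp (a x : V) : R := \sum_(i < n) a ord0 i * x ord0 i.
Definition sqnorm (x : V) : R := dotp x x.
Definition halfspace (u x : V) : set V := [set z | dotp u x < dotp u z].

Lemma dotpC a x : dotp a x = dotp x a.
Proof. by apply: eq_bigr => i _; rewrite mulrC. Qed.

Lemma dotpDr a x y : dotp a (x + y) = dotp a x + dotp a y.
Proof. by rewrite /dotp -big_split; apply: eq_bigr => i _; rewrite mxE mulrDr. Qed.

Lemma dotpZr a s x : dotp a (s *: x) = s * dotp a x.
Proof. by rewrite /dotp mulr_sumr; apply: eq_bigr => i _; rewrite mxE mulrCA. Qed.

Lemma dotpNr a x : dotp a (- x) = - dotp a x.
Proof. by rewrite -scaleN1r dotpZr mulN1r. Qed.

Lemma dotpBr a x y : dotp a (x - y) = dotp a x - dotp a y.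
Proof. by rewrite dotpDr dotpNr. Qed.

Lemma dotpZl a s x : dotp (s *: a) x = s * dotp a x.
Proof. by rewrite dotpC dotpZr dotpC. Qed.

Lemma dotpNl a x : dotp (- a) x = - dotp a x.
Proof. by rewrite dotpC dotpNr dotpC. Qed.

Lemma sqnorm_ge0 x : 0 <= sqnorm x.
Proof. by apply: sumr_ge0 => i _; rewrite -expr2 sqr_ge0. Qed.

Lemma sqnorm0 : sqnorm 0 = 0.
Proof. by rewrite /sqnorm /dotp big1 // => i _; rewrite mxE mul0r. Qed.

Lemma sqnorm_eq0 x : sqnorm x = 0 -> x = 0.
Proof.
move=> /eqP; rewrite psumr_eq0 => [/allP x0|i _]; last by rewrite -expr2 sqr_ge0.
apply/rowP => i; rewrite mxE; apply/eqP.
by have := x0 i (mem_index_enum i); rewrite mulf_eq0 orbb.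
Qed.

Lemma sqnormN x : sqnorm (- x) = sqnorm x.
Proof. by rewrite /sqnorm dotpNl dotpNr opprK. Qed.

Lemma sqnormZ s x : sqnorm (s *: x) = s ^+ 2 * sqnorm x.
Proof. by rewrite /sqnorm dotpZl dotpZr mulrA -expr2. Qed.

Lemma sqnormD x y : sqnorm (x + y) = sqnorm x + 2 * dotp x y + sqnorm y.
Proof. by rewrite /sqnorm !dotpDr !(dotpC (x + y)) !dotpDr (dotpC y x); ring. Qed.

Lemma eballE c r x : eball c r x <-> sqnorm (x - c) < r ^+ 2.
Proof.
rewrite /eball /=; suff -> : \sum_(i < n) (x ord0 i - c ord0 i) ^+ 2 = sqnorm (x - c) by [].
by apply: eq_bigr => i _; rewrite !mxE expr2.
Qed.

(* [`|v|] is the sup norm of the normed module of matrices, whereas [sqnorm]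
   and [eball] are Euclidean. *)
Lemma coord_le_norm (v : V) i : `|v ord0 i| <= `|v|.
Proof.
have -> : `|v| = mx_norm v by [].
rewrite mx_normrE; apply/bigmax_geP; right => /=.
by exists (ord0, i).
Qed.

Lemma sqr_coord_le_sqnorm (v : V) i : v ord0 i ^+ 2 <= sqnorm v.
Proof.
rewrite /sqnorm /dotp (bigD1 i) //= expr2 lerDl.
by apply: sumr_ge0 => j _; rewrite -expr2 sqr_ge0.
Qed.

Lemma dotp_le_norm (a v : V) : `|dotp a v| <= (\sum_i `|a ord0 i|) * `|v|.
Proof.
rewrite mulr_suml; apply: le_trans (ler_norm_sum _ _ _) _.
by apply: ler_sum => i _; rewrite normrM ler_wpM2l ?coord_le_norm.
Qed.

Lemma sqnorm_le_norm (v : V) : sqnorm v <= n%:R * `|v| ^+ 2.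
Proof.
rewrite -[n in n%:R]card_ord mulr_natl -sumr_const; apply: ler_sum => i _.
by rewrite -expr2 -real_normK ?num_real // lerXn2r ?nnegrE ?coord_le_norm.
Qed.

Lemma cluster_bounded_seq (w : nat -> V) : (forall k i, `|w k ord0 i| <= 1) ->
  exists ws : V, forall δ, 0 < δ -> forall N, exists2 k, (N <= k)%N & `|w k - ws| < δ.
Proof.
move=> w_bnd.
pose K := [set v : V | forall i, `[(-1 : R), 1]%classic (v ord0 i)].
have K_compact : compact K.
  apply: (@rV_compact _ _ (fun=> `[(-1 : R), 1]%classic)) => _.
  exact: segment_compact.
have wK : \forall k \near \oo, K (w k).
  by apply: nearW => k i; rewrite /= in_itv /= -ler_norml w_bnd.
have [ws [_ ws_cluster]] := K_compact _ (fmap_proper_filter w eventually_filter) wK.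
exists ws => δ δ0 N.
have tail : (w @ \oo) (w @` [set k | (N <= k)%N]).
  by apply: filterS (nbhs_infty_ge N) => k Nk; exists k.
have [_ [[k /= Nk <-] ball_k]] := ws_cluster _ _ tail (@nbhsx_ballx _ _ ws δ δ0).
by exists k; rewrite // distrC; move: ball_k; rewrite -ball_normE.
Qed.

Lemma normalize_dir (a : V) : a != 0 -> exists2 μ : R, 0 < μ & sqnorm (μ^-1 *: a) = 1.
Proof.
move=> a0; have sa : 0 < sqnorm a.
  by rewrite lt_def sqnorm_ge0 andbT; apply: contra a0 => /eqP/sqnorm_eq0 ->.
exists (Num.sqrt (sqnorm a)); first by rewrite sqrtr_gt0.
by rewrite sqnormZ exprVn sqr_sqrtr ?ltW // mulVf // gt_eqF.
Qed.

Lemma dotp_gtN (u w : V) r : sqnorm u = 1 -> 0 < r -> sqnorm w < r ^+ 2 -> - r < dotp u w.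
Proof.
move=> u1 r0 w_lt; have := sqnorm_ge0 (r *: u + w).
rewrite sqnormD sqnormZ u1 dotpZl mulr1 => h.
have : - (2 * r * r) < 2 * r * dotp u w by nra.
by rewrite -mulrN ltr_pM2l //; nra.
Qed.

Lemma eball_in_halfspace (u x : V) γ M : sqnorm u = 1 -> 0 < γ ->
  exists c r, M < r /\ eball c r x /\ eball c r `<=` [set y | dotp u x - γ < dotp u y].
Proof.
move=> u1 γ0; pose s := `|M| + 1.
have s0 : 0 < s by rewrite /s; have := normr_ge0 M; lra.
exists (x + s *: u), (s + γ / 2); split; first by have := ler_norm M; rewrite /s; lra.
split.
  by apply/eballE; rewrite opprD addrA subrr add0r sqnormN sqnormZ u1 mulr1; nra.
move=> y /eballE y_in; have r0 : 0 < s + γ / 2 by lra.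
have := dotp_gtN u1 r0 y_in.
by rewrite dotpBr dotpDr dotpZr -/(sqnorm u) u1 /=; lra.
Qed.

Lemma eball_in_open_halfspace (a x : V) b M : a != 0 -> b < dotp a x ->
  exists c r, M < r /\ eball c r x /\ eball c r `<=` [set y | b < dotp a y].
Proof.
move=> a0 bx; have [μ μ0 u1] := normalize_dir a0.
have γ0 : 0 < μ^-1 * (dotp a x - b) by rewrite mulr_gt0 ?invr_gt0 // subr_gt0.
have [c [r [Mr [xc sub]]]] := eball_in_halfspace x M u1 γ0.
exists c, r; do 2 split=> //; move=> y /sub /=.
by rewrite !dotpZl mulrBr opprB addrCA subrr addr0 ltr_pM2l // invr_gt0.
Qed.

Lemma eball_step (c z v : V) r : sqnorm v = 1 -> eball c r z ->
  exists2 e, 0 < e & eball c r (z + e *: v).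
Proof.
move=> v1 /eballE z_in; set g := r ^+ 2 - sqnorm (z - c).
have g0 : 0 < g by rewrite subr_gt0.
set h := dotp (z - c) v.
have h0 := normr_ge0 h.
pose e := g / (2 * (`|h| + 1) + g).
have den0 : 0 < 2 * (`|h| + 1) + g by lra.
have e0 : 0 < e by rewrite divr_gt0.
have e_eq : e * (2 * (`|h| + 1) + g) = g by rewrite mulfVK // gt_eqF.
exists e => //; apply/eballE; rewrite addrAC sqnormD sqnormZ v1 dotpZr -/h mulr1.
have : e * h <= e * `|h| by rewrite ler_pM2l // ler_norm.
rewrite /g in g0 e_eq; nra.
Qed.

Lemma disjoint_halfspaces_opp (u v x y : V) : sqnorm u = 1 -> sqnorm v = 1 ->
  (forall z, halfspace u x z -> ~ halfspace v y z) -> v = - u.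
Proof.
(* If [u.v > -1], points far along [u + v] lie in both halfspaces. *)
move=> u1 v1 disj.
have uv_le : 1 + dotp u v <= 0.
  rewrite leNgt; apply/negP => uv_gt.
  pose s := (`|dotp u x| + `|dotp v y| + 1) / (1 + dotp u v).
  have s_eq : s * (1 + dotp u v) = `|dotp u x| + `|dotp v y| + 1.
    by rewrite mulfVK // gt_eqF.
  have := ler_norm (dotp u x); have := ler_norm (dotp v y).
  have := normr_ge0 (dotp u x); have := normr_ge0 (dotp v y).
  move=> *; apply: (disj (s *: (u + v))); rewrite /halfspace /= dotpZr dotpDr.
    by rewrite -/(sqnorm u) u1 s_eq; lra.
  by rewrite -/(sqnorm v) v1 (dotpC v u) addrC s_eq; lra.
have : sqnorm (u + v) = 0.
  by apply/eqP; rewrite eq_le sqnorm_ge0 sqnormD u1 v1 andbT; lra.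
by move/sqnorm_eq0/eqP; rewrite addrC addr_eq0 => /eqP.
Qed.

Lemma eball_offsetE (x w y : V) r : eball (x + r *: w) r y <->
  sqnorm (y - x) < r * (2 * dotp (y - x) w + r * (1 - sqnorm w)).
Proof.
rewrite eballE opprD addrA [sqnorm (_ - r *: w)]sqnormD sqnormN sqnormZ dotpNr dotpZr.
by split=> ?; lra.
Qed.

Lemma eball_center_offset (c x : V) r : 0 < r -> eball c r x ->
  exists2 w, sqnorm w < 1 & c = x + r *: w.
Proof.
move=> r0 /eballE x_in; exists (r^-1 *: (c - x)); last first.
  by rewrite scalerA mulfV ?gt_eqF // scale1r addrC subrK.
move: x_in; rewrite -sqnormN opprB sqnormZ exprVn -{1}[r ^+ 2]mulr1.
by rewrite ltr_pdivrMl ?exprn_gt0.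
Qed.

Section LargeBalls.
Variables (x : V) (w : nat -> V) (r : nat -> R).
Hypothesis r_gt : forall k, k%:R < r k.
Hypothesis w_lt1 : forall k, sqnorm (w k) < 1.

Let r_gt0 k : 0 < r k.
Proof. exact: le_lt_trans (ler0n _ k) (r_gt k). Qed.

Let near_dir (ws : V) := forall X δ, 0 < δ -> exists k, X < r k /\ `|w k - ws| < δ.

Let exists_near_dir : exists ws, near_dir ws.
Proof.
have w_bnd k i : `|w k ord0 i| <= 1.
  have := sqr_coord_le_sqnorm (w k) i; have := w_lt1 k.
  rewrite -real_normK ?num_real //; have := normr_ge0 (w k ord0 i); nra.
have [ws ws_cluster] := cluster_bounded_seq w_bnd.
exists ws => X δ δ0; have [k Nk wk] := ws_cluster δ δ0 (Num.Def.truncn X).+1.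
exists k; split=> //; apply: lt_le_trans (truncnS_gt X) _.
by apply: ltW; apply: le_lt_trans (r_gt k); rewrite ler_nat.
Qed.

Let cover_of_near0 y : near_dir 0 -> exists k, eball (x + r k *: w k) (r k) y.
Proof.
move=> near0; set d := y - x; set K := \sum_i `|d ord0 i|.
have K0 : 0 <= K by apply: sumr_ge0.
have D0 := sqnorm_ge0 d.
have n0 : 0 <= n%:R :> R := ler0n _ n.
(* [n δ^2 <= 1/2], hence [sqnorm (w k) <= 1/2] once [`|w k| < δ]. *)
pose δ : R := (2 * (n%:R + 1))^-1.
have δ_eq : δ * (2 * (n%:R + 1)) = 1 by rewrite mulVf // gt_eqF //; lra.
have δ0 : 0 < δ by rewrite invr_gt0; lra.
have [k [r_big]] := near0 (2 * (sqnorm d + 2 * K + 1)) δ δ0.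
rewrite subr0 => w_small; exists k; apply/eball_offsetE.
have w_le1 : `|w k| <= 1 by nra.
have S_le : sqnorm (w k) <= 1 / 2.
  apply: le_trans (sqnorm_le_norm (w k)) _; have := normr_ge0 (w k); nra.
have dw_ge : - K <= dotp d (w k).
  have := dotp_le_norm d (w k); rewrite ler_norml -/K => /andP[+ _]; nra.
have rk0 := r_gt0 k.
have rS : r k * (1 / 2) <= r k * (1 - sqnorm (w k)) by rewrite ler_pM2l //; lra.
have rD : sqnorm d + 1 <= r k * (sqnorm d + 1) by rewrite ler_peMl //; lra.
suff : r k * (sqnorm d + 1) < r k * (2 * dotp d (w k) + r k * (1 - sqnorm (w k))).
  by lra.
by rewrite ltr_pM2l //; lra.
Qed.

Let cover_of_near ws y : near_dir ws -> 0 < dotp ws (y - x) ->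
  exists k, eball (x + r k *: w k) (r k) y.
Proof.
move=> near; set d := y - x; set ε := dotp ws d => ε_gt0.
set K := \sum_i `|d ord0 i|.
have K0 : 0 <= K by apply: sumr_ge0.
(* [K δ <= ε/2], hence [d.w_k >= ε/2] once [`|w k - ws| < δ]. *)
pose δ := ε / (2 * (K + 1)).
have δ_eq : δ * (2 * (K + 1)) = ε by rewrite mulfVK // gt_eqF //; lra.
have δ0 : 0 < δ by rewrite divr_gt0 //; lra.
have [k [r_big w_near]] := near (sqnorm d / ε) δ δ0.
exists k; apply/eball_offsetE.
have dw_ge : ε <= 2 * dotp d (w k).
  have := dotp_le_norm d (w k - ws); rewrite ler_norml -/K dotpBr (dotpC d ws) -/ε.
  by move=> /andP[+ _]; have := normr_ge0 (w k - ws); nra.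
have rk0 := r_gt0 k.
have rS0 : 0 < r k * (1 - sqnorm (w k)) by rewrite mulr_gt0 // subr_gt0.
move: r_big; rewrite ltr_pdivrMr // => r_big.
have : r k * ε <= r k * (2 * dotp d (w k)) by rewrite ler_pM2l.
nra.
Qed.

Lemma large_balls_cover : exists ws : V,
  forall y, ws = 0 \/ 0 < dotp ws (y - x) -> exists k, eball (x + r k *: w k) (r k) y.
Proof.
have [ws near] := exists_near_dir; exists ws => y [ws0|].
- by apply: cover_of_near0; rewrite -ws0.
- exact: cover_of_near.
Qed.

End LargeBalls.

Lemma halfspace_sub_of_large_balls (A : set V) (x y : V) : ~ A y ->
  (forall M, exists c r, M < r /\ eball c r x /\ eball c r `<=` A) ->
  exists2 u, sqnorm u = 1 & halfspace u x `<=` A.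
Proof.
move=> Ay large.
have /choice[wr wr_spec] : forall k : nat, exists wr : V * R,
    k%:R < wr.2 /\ sqnorm wr.1 < 1 /\ eball (x + wr.2 *: wr.1) wr.2 `<=` A.
  move=> k; have [c [r [kr [x_in sub]]]] := large k%:R.
  have [w w_lt1 c_eq] := eball_center_offset (le_lt_trans (ler0n _ k) kr) x_in.
  by exists (w, r); rewrite -c_eq.
have [ws cover] := @large_balls_cover x (fst \o wr) (snd \o wr)
  (fun k => (wr_spec k).1) (fun k => (wr_spec k).2.1).
have in_A z : ws = 0 \/ 0 < dotp ws (z - x) -> A z.
  by move=> /cover[k]; apply: (wr_spec k).2.2.
have ws0 : ws != 0 by apply/eqP => ws0; apply/Ay/in_A; left.
have [μ μ0 u1] := normalize_dir ws0.
exists (μ^-1 *: ws) => // z; rewrite /halfspace /= !dotpZl ltr_pM2l ?invr_gt0 //.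
by move=> xz; apply: in_A; right; rewrite dotpBr subr_gt0.
Qed.

Lemma eq_open_halfspace_inf (L : set V) (u y : V) : ~ L y -> L !=set0 ->
  (forall x, L x -> halfspace u x `<=` L) ->
  (forall z, L z -> exists2 z', L z' & dotp u z' < dotp u z) ->
  L = [set z | inf [set dotp u x | x in L] < dotp u z].
Proof.
move=> Ly [x0 Lx0] L_half L_open.
have ne : [set dotp u x | x in L] !=set0 by exists (dotp u x0), x0.
have lb : lbound [set dotp u x | x in L] (dotp u y).
  by move=> _ [x Lx <-]; rewrite leNgt; apply/negP => xy; apply/Ly/(L_half x Lx).
apply/seteqP; split=> z /=.
- move=> Lz; have [z' Lz' z'z] := L_open z Lz.
  by apply: le_lt_trans z'z; apply: ge_inf; [exists (dotp u y) | exists z'].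
- by move=> /(inf_lt ne)[_ [x Lx <-]]; apply: L_half.
Qed.

End EuclideanGeometry.

Section Meagre.
Variables (R : realType) (n : nat).
Local Notation V := 'rV[R]_n.

Lemma open_meets_compl_meagre (A O : set V) : meagre A -> open O -> O !=set0 ->
  exists2 z, O z & ~ A z.
Proof.
move=> [F [F_nd A_sub]] O_open O_ne.
have G_dense : dense (\bigcap_k ~` closure (F k)).
  apply: Baire => k; split; first exact/closed_openC/closed_closure.
  move=> U [u Uu] U_open; apply: contrapT => UG0.
  have U_sub : U `<=` closure (F k).
    by move=> v Uv; apply: contrapT => Fv; apply: UG0; exists v.
  rewrite openE in U_open; have := interiorS U_sub (U_open u Uu).
  by rewrite (F_nd k).
have [z [Oz Gz]] := G_dense O O_ne O_open.
by exists z => // /A_sub[k _ Fz]; apply: (Gz k I); apply: subset_closure.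
Qed.

Lemma slab_meets_compl_meagre (A : set V) (u : V) p q : meagre A -> sqnorm u = 1 -> p < q ->
  exists z, p < dotp u z < q /\ ~ A z.
Proof.
move=> A_meagre u1 pq; pose z0 := ((p + q) / 2) *: u.
pose K := \sum_i `|u ord0 i|.
have K0 : 0 <= K by apply: sumr_ge0.
pose δ := (q - p) / (2 * (K + 1)).
have δ_eq : δ * (2 * (K + 1)) = q - p by rewrite mulfVK // gt_eqF //; lra.
have δ0 : 0 < δ by rewrite divr_gt0 ?subr_gt0 //; lra.
have [z z_near Az] := open_meets_compl_meagre A_meagre (ball_open z0 δ)
  (ex_intro _ z0 (ballxx z0 δ0)).
exists z; split=> //.
move: z_near; rewrite -ball_normE /= distrC => z_near.
have : K * `|z - z0| <= K * δ by rewrite ler_wpM2l // ltW.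
have := dotp_le_norm u (z - z0); rewrite dotpBr dotpZr -/(sqnorm u) u1 mulr1 -/K.
by rewrite ler_norml => /andP[]; nra.
Qed.

End Meagre.

Section Coverage.
Variables (R : realType) (n : nat).
Local Notation V := 'rV[R]_n.

Lemma coverage_pinftyP (P : set (set V)) x :
  coverage P x = +oo%E <-> forall M, exists c r, M < r /\ anchor P x c r.
Proof.
rewrite /coverage; set radii := [set r | exists c, anchor P x c r].
split.
- case: ifPn => [_ //|_ sup_radii] M.
  have /ereal_sup_gt[_ [r [c anc] <-]] : (M%:E < ereal_sup [set r%:E | r in radii])%E.
    by rewrite sup_radii ltry.
  by rewrite lte_fin => Mr; exists c, r.
- move=> large; have [c [r [_ anc]]] := large 0.
  case: ifPn => [/eqP radii0|_].
    suff : [set r%:E | r in radii] r%:E by rewrite radii0.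
    by exists r => //; exists c.
  apply: hasNub_ereal_sup; last by exists r, c.
  move=> [M ub]; have [c' [r' [Mr anc']]] := large M.
  by have := ub r' (ex_intro _ c' anc'); rewrite leNgt Mr.
Qed.

Lemma infinite_pointwise_coverageP (P : set (set V)) Rf :
  infinite_pointwise_coverage P Rf <->
  forall x, feature_space P Rf x -> coverage P x = +oo%E.
Proof.
rewrite /infinite_pointwise_coverage ereal_inf_pinfty.
by split=> [cov x fx | cov _ [x fx <-]]; [apply: cov; exists x | apply: cov].
Qed.

End Coverage.

Section RefinedLinearOfCoverage.
Variables (R : realType) (n : nat) (P : set (set 'rV[R]_n)) (Rf : set 'rV[R]_n).
Local Notation V := 'rV[R]_n.
Local Notation label := (label_set P Rf).
Hypothesis P_classifier : classifier P Rf.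
Hypothesis P_coverage : infinite_pointwise_coverage P Rf.
Variables A B : set V.
Hypotheses (lA : label A) (lB : label B) (AB : A <> B).

Let P_disj C D x : P C -> P D -> C x -> D x -> C = D.
Proof. by case: P_classifier => -[disj _] _; apply: disj. Qed.

Let label_disj C D x : label C -> label D -> C x -> D x -> C = D.
Proof. by move=> [PC _] [PD _]; apply: P_disj. Qed.

Let label_ne C : label C -> C !=set0.
Proof. by case: P_classifier => -[_ [_ ne]] _ [PC CR]; apply: ne. Qed.

Let Rf_meagre : meagre Rf.
Proof. by case: P_classifier => _ [_ []]. Qed.

Let label_of_not_Rf z : ~ Rf z -> exists2 C, label C & C z.
Proof.
case: P_classifier => -[_ [cover _]] _ Rz; have [C [PC Cz]] := cover z.
by exists C => //; split=> // CR; apply: Rz; rewrite -CR.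
Qed.

Lemma label_large_anchor L x : label L -> L x ->
  forall M, exists c r, M < r /\ eball c r x /\ eball c r `<=` L.
Proof.
move=> [PL LR] Lx M.
have /coverage_pinftyP/(_ M)[c [r [Mr [_ [x_in sub]]]]] : coverage P x = +oo%E.
  by move/infinite_pointwise_coverageP : P_coverage; apply; exists L.
by exists c, r; do 2 split=> //; apply: sub.
Qed.

Lemma label_step L z v : label L -> L z -> sqnorm v = 1 ->
  exists2 e, 0 < e & L (z + e *: v).
Proof.
move=> lL Lz v1; have [c [r [_ [z_in sub]]]] := label_large_anchor lL Lz 0.
by have [e e0 ze_in] := eball_step v1 z_in; exists e => //; apply: sub.
Qed.

Lemma label_halfspace L x : label L -> L x -> exists2 u, sqnorm u = 1 & halfspace u x `<=` L.
Proof.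
move=> lL Lx; have [C [lC CL]] : exists C, label C /\ C <> L.
  by case: (pselect (A = L)) => [<-|AL]; [exists B; split=> // /esym | exists A].
have [y Cy] := label_ne lC.
apply: (@halfspace_sub_of_large_balls _ _ L x y); last exact: label_large_anchor.
by move=> Ly; apply: CL; apply: label_disj Cy Ly.
Qed.

Lemma label_halfspace_opp L1 L2 x y u v : label L1 -> label L2 -> L1 <> L2 ->
  sqnorm u = 1 -> sqnorm v = 1 -> halfspace u x `<=` L1 -> halfspace v y `<=` L2 ->
  v = - u.
Proof.
move=> l1 l2 L12 u1 v1 sub1 sub2.
apply: disjoint_halfspaces_opp u1 v1 _ => z /sub1 L1z /sub2 L2z.
by apply: L12; apply: label_disj L1z L2z.
Qed.

Lemma labels_common_direction : exists2 u, sqnorm u = 1 &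
  (forall x, A x -> halfspace u x `<=` A) /\ (forall y, B y -> halfspace (- u) y `<=` B).
Proof.
have [[x0 Ax0] [y0 By0]] := (label_ne lA, label_ne lB).
have [u0 u01 A_half0] := label_halfspace lA Ax0.
have [v0 v01 B_half0] := label_halfspace lB By0.
exists u0 => //; split=> [x Ax | y By].
- have [u u1 A_half] := label_halfspace lA Ax.
  have := label_halfspace_opp lA lB AB u01 v01 A_half0 B_half0.
  by move: (label_halfspace_opp lA lB AB u1 v01 A_half B_half0) => -> /oppr_inj <-.
- have [v v1 B_half] := label_halfspace lB By.
  by rewrite -(label_halfspace_opp lA lB AB u01 v1 A_half0 B_half).
Qed.

Lemma label_cases L : label L -> L = A \/ L = B.
Proof.
move=> lL; case: (pselect (L = A)) => [->|LA]; first by left.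
case: (pselect (L = B)) => [->|LB]; first by right.
have [u u1 [A_half B_half]] := labels_common_direction.
have [[x Ax] [y By]] := (label_ne lA, label_ne lB).
have [z Lz] := label_ne lL.
have [w w1 L_half] := label_halfspace lL Lz.
have wA := label_halfspace_opp lA lL (nesym LA) u1 w1 (A_half x Ax) L_half.
have Nu1 : sqnorm (- u) = 1 by rewrite sqnormN.
have wB := label_halfspace_opp lB lL (nesym LB) Nu1 w1 (B_half y By) L_half.
rewrite wA opprK in wB.
have := dotpNr u u; rewrite wB -/(sqnorm u) u1 => /eqP.
by rewrite -subr_eq0 opprK -mulr2n pnatr_eq0.
Qed.

Lemma labels_halfspaces : exists u α, [/\ sqnorm u = 1,
  A = [set z | α < dotp u z] & B = [set z | dotp u z < α]].
Proof.
have [u u1 [A_half B_half]] := labels_common_direction.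
have Nu1 : sqnorm (- u) = 1 by rewrite sqnormN.
have [[x0 Ax0] [y0 By0]] := (label_ne lA, label_ne lB).
have AB_disj z : A z -> ~ B z by move=> Az Bz; apply: AB; apply: label_disj Az Bz.
have A_shift z : A z -> exists2 z', A z' & dotp u z' < dotp u z.
  move=> Az; have [e e0 Aze] := label_step lA Az Nu1.
  by exists (z + e *: - u) => //; rewrite dotpDr dotpZr dotpNr -/(sqnorm u) u1; lra.
have B_shift z : B z -> exists2 z', B z' & dotp (- u) z' < dotp (- u) z.
  move=> Bz; have [e e0 Bze] := label_step lB Bz u1.
  by exists (z + e *: u) => //; rewrite !dotpNl dotpDr dotpZr -/(sqnorm u) u1; lra.
have A_eq := eq_open_halfspace_inf (AB_disj y0 ^~ By0) (ex_intro _ x0 Ax0) A_half A_shift.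
have B_eq := eq_open_halfspace_inf (AB_disj x0 Ax0) (ex_intro _ y0 By0) B_half B_shift.
set α := inf _ in A_eq; set β := inf _ in B_eq.
have αβ : α = - β.
  apply/eqP; rewrite eq_le; apply/andP; split; rewrite leNgt; apply/negP => lt.
  - have [z [/andP[z_gt z_lt] Rz]] := slab_meets_compl_meagre Rf_meagre u1 lt.
    have [C lC Cz] := label_of_not_Rf Rz.
    case: (label_cases lC) => CE; move: Cz; rewrite CE ?A_eq ?B_eq /= ?dotpNl; lra.
  - pose z := ((α - β) / 2) *: u.
    have uz : dotp u z = (α - β) / 2 by rewrite dotpZr -/(sqnorm u) u1 mulr1.
    apply: (AB_disj z); [rewrite A_eq | rewrite B_eq] => /=; rewrite ?dotpNl uz; lra.
exists u, α; split=> //; rewrite B_eq; apply/seteqP; split=> z /=; rewrite dotpNl; lra.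
Qed.

Lemma refined_linear_of_coverage : refined_linear P Rf.
Proof.
have [u [α [u1 A_eq B_eq]]] := labels_halfspaces.
have P_Rf : P Rf by case: P_classifier => _ [].
have Rf_eq : Rf = [set z | dotp u z = α].
  apply/seteqP; split=> z /=.
  - move=> Rz; have not_label C : label C -> ~ C z.
      by move=> [PC CR] Cz; apply: CR; apply: P_disj Cz Rz.
    apply: le_anti; rewrite !leNgt; apply/andP; split; apply/negP => ?.
    + by apply: (not_label A lA); rewrite A_eq.
    + by apply: (not_label B lB); rewrite B_eq.
  - move=> uz; apply: contrapT => Rz; have [C lC Cz] := label_of_not_Rf Rz.
    by case: (label_cases lC) => CE; move: Cz; rewrite CE ?A_eq ?B_eq /= uz ltxx.
exists u, α; split=> /=.
  by apply/eqP => u0; move: u1; rewrite u0 sqnorm0 => /eqP; rewrite eq_sym oner_eq0.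
split; first exact: Rf_eq.
split; apply/seteqP; split=> L /=.
- move=> PL; case: (pselect (L = Rf)) => [->|LR]; first by right; right.
  by case: (label_cases (conj PL LR)) => ->; [left | right; left].
- by case=> [->|[->|->]] //; [move: lA.1 | move: lB.1]; rewrite ?A_eq ?B_eq.
- by move=> lL; case: (label_cases lL) => ->; [left | right].
- by case=> ->; [move: lA | move: lB]; rewrite ?A_eq ?B_eq.
Qed.

End RefinedLinearOfCoverage.

Lemma coverage_of_refined_linear (R : realType) (n : nat) (P : set (set 'rV[R]_n)) Rf :
  classifier P Rf -> refined_linear P Rf -> infinite_pointwise_coverage P Rf.
Proof.
move=> [[P_disj _] _] [a [b [a0 /= [_ [_ label_eq]]]]].
apply/infinite_pointwise_coverageP => x [L lL Lx]; apply/coverage_pinftyP => M.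
have [a' [b' [a'0 b'x L_eq]]] :
    exists a' b', [/\ a' != 0, b' < dotp a' x & L = [set y | b' < dotp a' y]].
  move: (lL); rewrite label_eq => -[L_eq | L_eq]; rewrite L_eq in Lx.
  - by exists a, b.
  - exists (- a), (- b); rewrite oppr_eq0 dotpNl ltrN2 L_eq; split=> //.
    by apply/seteqP; split=> y /=; rewrite dotpNl ltrN2.
have [c [r [Mr [x_in sub]]]] := eball_in_open_halfspace `|M| a'0 b'x.
exists c, r; split; first exact: le_lt_trans (ler_norm M) Mr.
split; first exact: le_lt_trans (normr_ge0 M) Mr.
by split=> // C PC Cx; rewrite (P_disj C L x PC lL.1 Cx Lx) L_eq.
Qed.

Theorem theorem1 (R : realType) (n : nat) (P : set (set 'rV[R]_n)) (Rf : set 'rV[R]_n) :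
  classifier P Rf -> nontrivial P Rf ->
  (infinite_pointwise_coverage P Rf <-> refined_linear P Rf).
Proof.
move=> P_classifier [A [B [lA [lB AB]]]]; split; last exact: coverage_of_refined_linear.
by move=> P_coverage; exact: (refined_linear_of_coverage P_classifier P_coverage lA lB AB).
Qed.
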